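(* Let $G=(V,E)$ be a graph on $V=\{1,\dots,N\}$, let $\mathcal L\subseteq\{1,\dots,N\}$ be a set of lost qubits, let $\rho$ be the post-loss state defined in the context, and let $G'=G[V\setminus\mathcal L]$. Let $r$ be a root of $G$ (a vertex of degree $n_{\max}=n_{\max}(G)$) with $r\notin\mathcal L$. Define $$\mathcal W^{G}=\mathcal N_r^{G}\setminus\bigcup_{l\in\mathcal L}\overline{\mathcal N_l^{G}},\qquad \mathcal T^{G}=\{1,\dots,N\}\setminus\Big(\bigcup_{l\in\mathcal L}\overline{\mathcal N_l^{G}}\cup\overline{\mathcal N_r^{G}}\Big).$$ Then $$\langle I_r^{G*}\rangle_\rho=\langle I_r^{G'*}\rangle_\rho=\begin{cases}\sqrt2\,n_{\max}+\sqrt2\,|\mathcal W^{G}|+|\mathcal T^{G}| & \text{if } \overline{\mathcal N_r^{G}}\cap\mathcal L=\emptyset,\\[2pt] \sqrt2\,|\mathcal W^{G}|+|\mathcal T^{G}| & \text{otherwise.}\end{cases}$$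
   Context: Qubits are labelled $1,\dots,N$; $X_i,Z_i$ denote the Pauli $X$ and $Z$ operators acting on qubit $i$ (identity on all other qubits). For a simple undirected graph $H$ with vertex set $V(H)\subseteq\{1,\dots,N\}$, $\mathcal N_i^H$ is the set of neighbours of $i$ in $H$, $\overline{\mathcal N_i^H}=\mathcal N_i^H\cup\{i\}$, and $n_{\max}(H)$ is the maximum degree of $H$; a root of $H$ is a vertex of degree $n_{\max}(H)$. The stabilizer of vertex $i$ in $H$ is $S_i^H=X_i\prod_{j\in\mathcal N_i^H}Z_j$. For $G=(V,E)$ with $V=\{1,\dots,N\}$, the graph state $|\phi^G\rangle$ is the unique $N$-qubit state with $S_i^G|\phi^G\rangle=|\phi^G\rangle$ for all $i$. For a vertex $r$ of $H$ define the operator $$I_r^{H*}=\sqrt2\,n_{\max}(H)\,S_r^H+\sqrt2\sum_{i\in\mathcal N_r^H}S_i^H+\sum_{i\in V(H)\setminus\overline{\mathcal N_r^H}}S_i^H .$$ For a set $\mathcal L\subseteq\{1,\dots,N\}$ of lost qubits, $G'=G[V\setminus\mathcal L]$ is the induced subgraph on $V\setminus\mathcal L$ (vertices keep their labels; its operators act as identity on qubits in $\mathcal L$), and the post-loss state is the $N$-qubit state $\rho=\mathrm{Tr}_{\mathcal L}\big(|\phi^G\rangle\langle\phi^G|\big)\otimes\bigotimes_{l\in\mathcal L}|0\rangle\langle0|_l$. $\langle A\rangle_\rho=\mathrm{Tr}(A\rho)$. *)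

(* operators on N qubits are complex (algC) matrices of size 2^N,
   with rows/columns indexed (via enum_val) by bit strings {ffun 'I_N -> bool}. *)
From HB Require Import structures.
From mathcomp Require Import all_boot all_order all_algebra all_field.
Set Implicit Arguments. Unset Strict Implicit. Unset Printing Implicit Defensive.
Import Order.TTheory GRing.Theory Num.Theory.
Local Open Scope ring_scope.

Definition bits (N : nat) := {ffun 'I_N -> bool}.
Definition qdim (N : nat) : nat := #|{: bits N}|.
Definition lab {N : nat} (a : 'I_(qdim N)) : bits N := enum_val a.
Definition ind {N : nat} (x : bits N) : 'I_(qdim N) := enum_rank x.

Definition op (N : nat) := 'M[algC]_(qdim N).

Definition flip {N : nat} (i : 'I_N) (x : bits N) : bits N :=
  [ffun j => if j == i then ~~ x j else x j].

Definition PX {N : nat} (i : 'I_N) : op N :=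
  \matrix_(a, b) ((lab a == flip i (lab b))%:R).
Definition PZ {N : nat} (i : 'I_N) : op N :=
  \matrix_(a, b) ((a == b)%:R * (-1) ^+ (lab b i)).

Definition opprod {N : nat} (S : {set 'I_N}) (F : 'I_N -> op N) : op N :=
  \big[mulmx/1%:M]_(j in S) F j.

(* A simple graph H with vertex set Vs ⊆ {qubits} and adjacency e
   (e symmetric, irreflexive); the edges of H are the e-edges inside Vs. *)
Definition nbhd {N : nat} (Vs : {set 'I_N}) (e : rel 'I_N) (i : 'I_N) : {set 'I_N} :=
  [set j in Vs | e i j].
Definition cnbhd {N : nat} (Vs : {set 'I_N}) (e : rel 'I_N) (i : 'I_N) : {set 'I_N} :=
  i |: nbhd Vs e i.
Definition nmax {N : nat} (Vs : {set 'I_N}) (e : rel 'I_N) : nat :=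
  \max_(i in Vs) #|nbhd Vs e i|.

Definition stab {N : nat} (Vs : {set 'I_N}) (e : rel 'I_N) (i : 'I_N) : op N :=
  PX i *m opprod (nbhd Vs e i) PZ.

Definition Istar {N : nat} (Vs : {set 'I_N}) (e : rel 'I_N) (r : 'I_N) : op N :=
  (sqrtC 2 * (nmax Vs e)%:R) *: stab Vs e r
  + sqrtC 2 *: (\sum_(i in nbhd Vs e r) stab Vs e i)
  + \sum_(i in Vs :\: cnbhd Vs e r) stab Vs e i.

Definition normalized {N : nat} (psi : 'cV[algC]_(qdim N)) : Prop :=
  \sum_a `|psi a 0| ^+ 2 = 1.

(* post-loss state Tr_L(|psi><psi|) ⊗ |0><0|_L, written out entrywise *)
Definition merge {N : nat} (L : {set 'I_N}) (x z : bits N) : bits N :=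
  [ffun i => if i \in L then z i else x i].
Definition postloss {N : nat} (L : {set 'I_N}) (psi : 'cV[algC]_(qdim N)) : op N :=
  \matrix_(a, b)
    (([forall l in L, ~~ lab a l] && [forall l in L, ~~ lab b l])%:R *
     \sum_(z : bits N | [forall i in ~: L, ~~ z i])
        psi (ind (merge L (lab a) z)) 0 * (psi (ind (merge L (lab b) z)) 0)^*).

Definition expect {N : nat} (A rho : op N) : algC := \tr (A *m rho).

From Pilot Require Import Defs.
From HB Require Import structures.
From mathcomp Require Import all_boot all_order all_algebra all_field.
From mathcomp Require Import ring.
Import Order.TTheory GRing.Theory Num.Theory.
Local Open Scope ring_scope.
Set Implicit Arguments. Unset Strict Implicit. Unset Printing Implicit Defensive.

(* Every stabilizer S_i^H = X_i Z_{N_i^H} is a "signed flip": in the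
   computational basis it maps |y> to (-1)^(parity of y on N_i^H) |flip_i y>.
   The expectation of a signed flip on qubit i with sign set S in the post-loss
   state rho vanishes when i is lost, and otherwise equals the correlation
   C(i, S \ L) = sum_u (-1)^(u|S\L) psi(u) conj psi(flip_i u) of the original
   graph state: tracing out L and re-preparing |0> on L only removes the Z's on L.
   Since psi is stabilized by every S_l^G, psi(flip_l u) = (-1)^(u|N_l) psi(u);
   hence C(i, N_i \ L) = 1 when no neighbour of i is lost (normalization), and
   C(i, N_i \ L) = 0 when i is adjacent to a lost l (S_l^G anticommutes with it).
   So <S_i^H>_rho = [i is outside the lost region \bigcup_{l in L} N_l-bar], both
   for H = G and for H = G', and summing over the three groups of stabilizers
   in I_r^{H*} gives the counting formula; the two cases of the theorem differ
   only in whether the root r lies in the lost region, and when it does not,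
   deleting L does not lower the maximum degree. *)

Section BitStrings.
Variable N : nat.
Implicit Types (x y u z : bits N) (S L : {set 'I_N}) (i j l : 'I_N).

Lemma lab_ind x : lab (ind x) = x. Proof. exact: enum_rankK. Qed.

Lemma lab_eq (a : 'I_(qdim N)) x : (lab a == x) = (a == ind x).
Proof. by apply/eqP/eqP => [<-|->]; rewrite /lab /ind ?enum_valK ?enum_rankK. Qed.

Lemma sum_bits (F : 'I_(qdim N) -> algC) : \sum_a F a = \sum_x F (ind x).
Proof.
by rewrite (reindex (@ind N)) //; exists (@lab N) => x _; rewrite /lab /ind ?enum_valK ?enum_rankK.
Qed.

Lemma flipK i : involutive (@flip N i).
Proof. by move=> x; apply/ffunP => j; rewrite !ffunE; case: eqP => // ->; rewrite negbK. Qed.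

Lemma flipC i l x : flip i (flip l x) = flip l (flip i x).
Proof. by apply/ffunP => j; rewrite !ffunE; case: (j == i); case: (j == l). Qed.

Lemma flip_ne i l x : l != i -> flip i x l = x l.
Proof. by move=> li; rewrite ffunE (negbTE li). Qed.

Lemma flip_eq i x : flip i x i = ~~ x i.
Proof. by rewrite ffunE eqxx. Qed.

Lemma eq_flip i x w : (x == flip i w) = (flip i x == w).
Proof. by apply/eqP/eqP => [->|<-]; rewrite flipK. Qed.

Lemma sum_flip i (F : bits N -> algC) : \sum_x F x = \sum_x F (flip i x).
Proof. by rewrite (reindex (flip i)) //; exists (flip i) => x _; rewrite flipK. Qed.

(* The sign (-1)^(number of ones of x in S): the eigenvalue of Z_S on |x>. *)
Definition parity S x : algC := \prod_(j in S) (-1) ^+ x j.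

Lemma parity_flip_notin S l x : l \notin S -> parity S (flip l x) = parity S x.
Proof. by move=> lS; apply: eq_bigr => j jS; rewrite flip_ne //; apply: contraNneq lS => <-. Qed.

Lemma parity_flip_in S l x : l \in S -> parity S (flip l x) = - parity S x.
Proof.
move=> lS; rewrite /parity !(bigD1 l lS) /= flip_eq.
rewrite (eq_bigr (fun j => (-1) ^+ x j)) => [|j /andP[_ jl]]; last by rewrite flip_ne.
by case: (x l); rewrite /= ?expr0 ?expr1 ?mulN1r ?mul1r ?opprK.
Qed.

Lemma parity_sq S x : parity S x * parity S x = 1.
Proof.
rewrite /parity -big_split /= big1 // => j _.
by case: (x j); rewrite /= ?expr0 ?expr1 ?mulrNN ?mulr1.
Qed.

Lemma parity_conj S x : (parity S x)^* = parity S x.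
Proof.
rewrite /parity rmorph_prod; apply: eq_bigr => j _.
by case: (x j); rewrite /= ?expr0 ?expr1 ?rmorph1 ?rmorphN1.
Qed.

Lemma merge_flip L i y z : i \notin L -> Defs.merge L (flip i y) z = flip i (Defs.merge L y z).
Proof.
move=> iL; apply/ffunP => j; rewrite !ffunE; case: (boolP (j \in L)) => // jL.
by have /negbTE -> : j != i by apply: contraNneq iL => <-.
Qed.

Lemma parity_merge L S y z : [forall l in L, ~~ y l] ->
  parity S y = parity (S :\: L) (Defs.merge L y z).
Proof.
move=> /forallP y0; rewrite /parity (big_setID L) /= big1 ?mul1r => [|j].
  by apply: eq_bigr => j; rewrite inE => /andP[jL _]; rewrite ffunE (negbTE jL).
by rewrite inE => /andP[_ jL]; move: (y0 j); rewrite jL /= => /negbTE ->.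
Qed.

(* Every label u splits uniquely as (y, z) with y zero on L, z zero off L and
   u = merge L y z: the double sum in [postloss] is a sum over all labels. *)
Lemma merge_sum L (H : bits N -> algC) :
  \sum_(y : bits N) ([forall l in L, ~~ y l])%:R *
     \sum_(z : bits N | [forall i in ~: L, ~~ z i]) H (Defs.merge L y z) =
  \sum_(u : bits N) H u.
Proof.
rewrite (bigID (fun y => [forall l in L, ~~ y l])) /= [X in _ + X]big1 ?addr0 => [|y /negbTE ->];
  last by rewrite mul0r.
under eq_bigr => y -> do rewrite mul1r.
pose zero : bits N := [ffun=> false].
rewrite pair_big_dep /= (reindex_onto (fun u => (Defs.merge L u zero, Defs.merge L zero u))
  (fun p => Defs.merge L p.1 p.2)) /= => [|[y z] /andP[/forallP y0 /forallP z0]].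
  have mergeK u : Defs.merge L (Defs.merge L u zero) (Defs.merge L zero u) = u.
    by apply/ffunP => j; rewrite !ffunE; case: (j \in L).
  apply: eq_big => u; rewrite mergeK // eqxx andbT.
  by apply/andP; split; apply/forallP => j; apply/implyP;
    rewrite ?inE /zero !ffunE; case: (j \in L).
congr pair; apply/ffunP => j; rewrite /zero !ffunE; case: (boolP (j \in L)) => jL //.
  by move: (y0 j); rewrite jL => /negbTE.
by move: (z0 j); rewrite inE jL => /negbTE.
Qed.

End BitStrings.

Section SignedFlips.
Variable N : nat.
Implicit Types (S : {set 'I_N}) (i : 'I_N).

Definition diag_op (g : bits N -> algC) : op N := \matrix_(a, b) ((a == b)%:R * g (lab b)).

Definition signed_flip i S : op N :=
  \matrix_(a, b) ((lab a == flip i (lab b))%:R * parity S (lab b)).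

Lemma sum_delta (F : 'I_(qdim N) -> algC) b : \sum_c (c == b)%:R * F c = F b.
Proof. by rewrite (bigD1 b) //= eqxx mul1r big1 ?addr0 // => c /negbTE ->; rewrite mul0r. Qed.

Lemma PZ_diag i g : PZ i *m diag_op g = diag_op (fun x => (-1) ^+ (x i) * g x).
Proof.
apply/matrixP => a b; rewrite !mxE.
under eq_bigr => c _ do rewrite !mxE -mulrA [a == c]eq_sym.
rewrite sum_delta; case: (eqVneq a b) => [->|_]; first by rewrite !mul1r.
by rewrite !mul0r mulr0.
Qed.

Lemma opprod_PZ S : opprod S PZ = diag_op (parity S).
Proof.
rewrite /opprod /parity; elim: (index_enum _) => [|j r IH].
  by rewrite big_nil; apply/matrixP => a b; rewrite !mxE big_nil mulr1.
rewrite !big_cons IH; case jS: (j \in S); rewrite ?PZ_diag;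
  by apply/matrixP => a b; rewrite !mxE big_cons jS.
Qed.

Lemma stab_signed_flip (Vs : {set 'I_N}) e i : stab Vs e i = signed_flip i (nbhd Vs e i).
Proof.
rewrite /stab opprod_PZ; apply/matrixP => a b; rewrite !mxE.
under eq_bigr => c _ do rewrite !mxE mulrA [_ * (c == b)%:R]mulrC -mulrA.
by rewrite sum_delta.
Qed.

End SignedFlips.

Section PostLossTrace.
Variables (N : nat) (L : {set 'I_N}) (psi : 'cV[algC]_(qdim N)).
Implicit Types (S : {set 'I_N}) (i : 'I_N).

(* <psi| X_i Z_S |psi>, written as a sum over basis labels. *)
Definition flip_correlation i S : algC :=
  \sum_(u : bits N) parity S u * psi (ind u) 0 * (psi (ind (flip i u)) 0)^*.

Lemma expect_signed_flip_sum i S :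
  expect (signed_flip i S) (postloss L psi) =
  \sum_(y : bits N) parity S y *
    (([forall l in L, ~~ y l] && [forall l in L, ~~ flip i y l])%:R *
     \sum_(z : bits N | [forall j in ~: L, ~~ z j])
        psi (ind (Defs.merge L y z)) 0 * (psi (ind (Defs.merge L (flip i y) z)) 0)^*).
Proof.
rewrite /expect /mxtrace; under eq_bigr => a _ do rewrite mxE.
rewrite exchange_big sum_bits /=; apply: eq_bigr => y _.
under eq_bigr => a _ do rewrite mxE lab_eq -mulrA.
by rewrite sum_delta mxE !lab_ind.
Qed.

(* A flip of a lost qubit leaves the re-prepared |0> subspace: zero expectation. *)
Lemma expect_signed_flip_lost i S : i \in L -> expect (signed_flip i S) (postloss L psi) = 0.
Proof.
move=> iL; rewrite expect_signed_flip_sum big1 // => y _.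
suff /negbTE -> : ~~ ([forall l in L, ~~ y l] && [forall l in L, ~~ flip i y l]).
  by rewrite mul0r mulr0.
apply/andP => -[/forallP/(_ i) + /forallP/(_ i)].
by rewrite iL flip_eq negbK /= => /negbTE ->.
Qed.

Lemma expect_signed_flip_kept i S : i \notin L ->
  expect (signed_flip i S) (postloss L psi) = flip_correlation i (S :\: L).
Proof.
move=> iL; rewrite expect_signed_flip_sum /flip_correlation.
rewrite -(merge_sum L (fun u => parity (S :\: L) u * psi (ind u) 0 * (psi (ind (flip i u)) 0)^*)).
apply: eq_bigr => y _.
have -> : [forall l in L, ~~ flip i y l] = [forall l in L, ~~ y l].
  apply: eq_forallb => l; case lL: (l \in L) => //=; rewrite flip_ne //.
  by apply: contraNneq iL => <-.
rewrite andbb; case: (boolP [forall l in L, ~~ y l]) => y0 /=; last by rewrite !mul0r mulr0.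
rewrite !mul1r big_distrr; apply: eq_bigr => z _.
by rewrite merge_flip // (parity_merge S z y0) -mulrA.
Qed.

End PostLossTrace.

Section StabilizedState.
Variables (N : nat) (psi : 'cV[algC]_(qdim N)).
Implicit Types (S : {set 'I_N}) (i l : 'I_N).

Lemma signed_flip_fixed i S : signed_flip i S *m psi = psi -> i \notin S ->
  forall x, psi (ind (flip i x)) 0 = parity S x * psi (ind x) 0.
Proof.
move=> fixed iS x; have /(congr1 (fun v : 'cV_(qdim N) => v (ind x) 0)) := fixed.
rewrite mxE; under eq_bigr => b _ do rewrite mxE lab_ind eq_flip eq_sym lab_eq -mulrA.
rewrite sum_delta lab_ind parity_flip_notin // => <-.
by rewrite mulrA parity_sq mul1r.
Qed.

Lemma flip_correlation_one i S : signed_flip i S *m psi = psi -> i \notin S ->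
  normalized psi -> flip_correlation psi i S = 1.
Proof.
move=> fixed iS norm1; rewrite -norm1 /normalized sum_bits; apply: eq_bigr => u _.
rewrite (signed_flip_fixed fixed iS) rmorphM /= parity_conj normCK.
by rewrite mulrACA parity_sq mul1r.
Qed.

(* If X_l Z_Sl fixes psi, i is in Sl and l is not in S, then X_i Z_S
   anticommutes with X_l Z_Sl, so its correlation vanishes. *)
Lemma flip_correlation_zero i l S Sl : signed_flip l Sl *m psi = psi -> l \notin Sl ->
  i != l -> l \notin S -> i \in Sl -> flip_correlation psi i S = 0.
Proof.
move=> fixed lSl il lS iSl; apply/eqP; rewrite -eqNr; apply/eqP.
rewrite /flip_correlation {2}(sum_flip l) -sumrN; apply: eq_bigr => u _.
rewrite parity_flip_notin // flipC !(signed_flip_fixed fixed lSl) parity_flip_in //.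
rewrite !rmorphM /= rmorphN /= parity_conj.
by rewrite -[LHS]mulr1 -(parity_sq Sl u); ring.
Qed.

End StabilizedState.

Section Expectation.
Variable N : nat.
Implicit Types (A B rho : op N) (Vs X : {set 'I_N}).

Lemma expectD A B rho : expect (A + B) rho = expect A rho + expect B rho.
Proof. by rewrite /expect mulmxDl mxtraceD. Qed.

Lemma expectZ c A rho : expect (c *: A) rho = c * expect A rho.
Proof. by rewrite /expect -scalemxAl mxtraceZ. Qed.

Lemma expect_sum (P : pred 'I_N) (F : 'I_N -> op N) rho :
  expect (\sum_(i | P i) F i) rho = \sum_(i | P i) expect (F i) rho.
Proof.
apply: (big_ind2 (fun A x => expect A rho = x)) => // [|A x B y <- <-].
  by rewrite /expect mul0mx mxtrace0.
by rewrite expectD.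
Qed.

Lemma sum_indicator (A X : {set 'I_N}) :
  \sum_(i in A) ((i \notin X)%:R : algC) = #|A :\: X|%:R.
Proof.
rewrite -sum1_card natr_sum (bigID (mem X)) /= big1 ?add0r => [|i /andP[_ ->]] //.
by apply: eq_big => [i|i /andP[_ ->]]; rewrite // inE andbC.
Qed.

Lemma expect_Istar Vs X e r rho : r \in Vs ->
  (forall i, i \in Vs -> expect (stab Vs e i) rho = (i \notin X)%:R) ->
  expect (Istar Vs e r) rho =
    sqrtC 2 * (nmax Vs e)%:R * (r \notin X)%:R
    + sqrtC 2 * #|nbhd Vs e r :\: X|%:R + #|Vs :\: cnbhd Vs e r :\: X|%:R.
Proof.
move=> rVs stab_value; rewrite /Istar !expectD !expectZ !expect_sum stab_value // -!sum_indicator.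
congr (_ + _ * _ + _); apply: eq_bigr => i iA; rewrite stab_value //.
  by case/setIdP: iA.
by case/setDP: iA.
Qed.

End Expectation.

Section GraphStateLoss.
Variables (N : nat) (e : rel 'I_N) (L : {set 'I_N}) (psi : 'cV[algC]_(qdim N)).
Hypotheses (e_sym : symmetric e) (e_irr : irreflexive e).
Hypotheses (norm1 : normalized psi) (stabilized : forall i, stab [set: 'I_N] e i *m psi = psi).

Local Notation G := [set: 'I_N].

Definition lost_region : {set 'I_N} := \bigcup_(l in L) cnbhd G e l.

Lemma lost_regionP i : reflect (exists2 l, l \in L & (i == l) || e l i) (i \in lost_region).
Proof.
by apply: (iffP bigcupP) => -[l lL il]; exists l => //; move: il; rewrite !inE.
Qed.

Lemma lost_in_region l : l \in L -> l \in lost_region.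
Proof. by move=> lL; apply/lost_regionP; exists l; rewrite ?eqxx. Qed.

Lemma flip_correlation_neighbourhood i : i \notin L ->
  flip_correlation psi i (nbhd G e i :\: L) = (i \notin lost_region)%:R.
Proof.
have fixed j : signed_flip j (nbhd G e j) *m psi = psi by rewrite -stab_signed_flip.
have notin_nbhd j : j \notin nbhd G e j by rewrite inE e_irr andbF.
move=> iL; case: lost_regionP => [[l lL /orP[/eqP il|eli]]|far] /=.
- by move: iL; rewrite il lL.
- apply: (flip_correlation_zero (fixed l)); rewrite ?inE ?lL ?eli ?e_irr ?andbF //.
  by apply: contraNneq iL => ->.
- have -> : nbhd G e i :\: L = nbhd G e i.
    apply/setP => j; rewrite !inE; case: (boolP (j \in L)) => //= jL.
    by case eij: (e i j) => //; case: far; exists j; rewrite // e_sym eij orbT.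
  exact: flip_correlation_one (fixed i) (notin_nbhd i) norm1.
Qed.

Lemma expect_stab_post_loss (Vs : {set 'I_N}) i : ~: L \subset Vs ->
  expect (stab Vs e i) (postloss L psi) = (i \notin lost_region)%:R.
Proof.
move=> keptVs; rewrite stab_signed_flip; case: (boolP (i \in L)) => iL.
  by rewrite expect_signed_flip_lost // lost_in_region.
rewrite expect_signed_flip_kept // -flip_correlation_neighbourhood //; congr flip_correlation.
apply/setP => j; rewrite !inE; case: (boolP (j \in L)) => //= jL.
by rewrite (subsetP keptVs) // inE.
Qed.

Lemma expect_Istar_post_loss (Vs : {set 'I_N}) r : ~: L \subset Vs -> r \in Vs ->
  expect (Istar Vs e r) (postloss L psi) =
    sqrtC 2 * (nmax Vs e)%:R * (r \notin lost_region)%:R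
    + sqrtC 2 * #|nbhd G e r :\: lost_region|%:R + #|~: (lost_region :|: cnbhd G e r)|%:R.
Proof.
move=> keptVs rVs; rewrite (expect_Istar (X := lost_region) rVs) => [|i _]; last first.
  exact: expect_stab_post_loss.
have inVs j : j \notin lost_region -> j \in Vs.
  by move=> jX; apply: (subsetP keptVs); rewrite inE; apply: contra jX; apply: lost_in_region.
have -> : nbhd Vs e r :\: lost_region = nbhd G e r :\: lost_region.
  by apply/setP => j; rewrite !inE; case: (boolP (j \in lost_region)) => //= /inVs ->.
have -> // : Vs :\: cnbhd Vs e r :\: lost_region = ~: (lost_region :|: cnbhd G e r).
by apply/setP => j; rewrite !inE; case: (boolP (j \in lost_region)) => //= /inVs ->; rewrite andbT.
Qed.

Lemma root_lost r : (r \in lost_region) = (cnbhd G e r :&: L != set0).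
Proof.
apply/lost_regionP/set0Pn => [[l lL rl]|[l /setIP[rl lL]]]; exists l; rewrite ?inE ?lL ?andbT //.
  by case/orP: rl => [/eqP ->|elr]; rewrite ?eqxx // e_sym elr orbT.
by move: rl; rewrite !inE => /orP[/eqP ->|/= erl]; rewrite ?eqxx // e_sym erl orbT.
Qed.

End GraphStateLoss.

(* If the closed neighbourhood of a root r of G avoids L, deleting L keeps r of
   full degree, so G' has the same maximum degree as G. *)
Lemma nmax_kept N (e : rel 'I_N) (L : {set 'I_N}) r :
  #|nbhd [set: 'I_N] e r| = nmax [set: 'I_N] e -> cnbhd [set: 'I_N] e r :&: L == set0 ->
  nmax (~: L) e = nmax [set: 'I_N] e.
Proof.
move=> root /eqP safe.
have kept j : j \in cnbhd [set: 'I_N] e r -> j \notin L.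
  by move=> jr; apply/negP => jL; have := in_set0 j; rewrite -safe inE jr jL.
have same_nbhd : nbhd (~: L) e r = nbhd [set: 'I_N] e r.
  apply/setP => j; rewrite !inE; case erj: (e r j); rewrite ?andbF // andbT.
  by apply: kept; rewrite !inE erj orbT.
apply/eqP; rewrite eqn_leq; apply/andP; split.
  apply/bigmax_leqP => i _; apply: leq_trans (leq_bigmax_cond i (in_setT i)).
  by apply: subset_leq_card; apply/subsetP => j; rewrite !inE => /andP[_ ->].
rewrite -root -same_nbhd; apply: (leq_bigmax_cond r).
by rewrite inE kept // setU11.
Qed.

Theorem theorem1 (N : nat) (e : rel 'I_N) (He_sym : symmetric e) (He_irr : irreflexive e)
  (L : {set 'I_N}) (psi : 'cV[algC]_(qdim N))
  (Hnorm : normalized psi)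
  (Hstab : forall i : 'I_N, stab [set: 'I_N] e i *m psi = psi)
  (r : 'I_N) (Hroot : #|nbhd [set: 'I_N] e r| = nmax [set: 'I_N] e)
  (HrL : r \notin L) :
  let G := [set: 'I_N] in
  let rho := postloss L psi in
  let lostN := \bigcup_(l in L) cnbhd G e l in
  let W := nbhd G e r :\: lostN in
  let T := ~: (lostN :|: cnbhd G e r) in
  expect (Istar G e r) rho = expect (Istar (~: L) e r) rho /\
  expect (Istar (~: L) e r) rho =
    (if cnbhd G e r :&: L == set0
     then sqrtC 2 * (nmax G e)%:R + sqrtC 2 * #|W|%:R + #|T|%:R
     else sqrtC 2 * #|W|%:R + #|T|%:R).
Proof.
move=> G rho lostN W T.
have Istar_value (Vs : {set 'I_N}) : ~: L \subset Vs -> r \in Vs -> expect (Istar Vs e r) rho =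
    sqrtC 2 * (nmax Vs e)%:R * (r \notin lostN)%:R + sqrtC 2 * #|W|%:R + #|T|%:R.
  exact: (expect_Istar_post_loss He_sym He_irr Hnorm Hstab).
rewrite !Istar_value ?subsetT ?in_setT ?inE //.
have -> : (r \in lostN) = (cnbhd G e r :&: L != set0) by exact: root_lost.
case: ifP => safe /=; last by rewrite !mulr0 !add0r.
by rewrite (nmax_kept Hroot safe) !mulr1.
Qed.
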